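(* Let $f:\mathcal{X}\times\mathcal{U}\to\mathcal{X}$ be Lipschitz with constant $L_f$ (i.e. $\|f(x,u)-f(x',u')\|_\infty\le L_f\|(x-x',u-u')\|_\infty$) with $f(0,u_0)=0$, and let $V:\mathcal{X}\to\mathbb{R}$ and $\pi:\mathcal{X}\to\mathcal{U}$, with $\pi$ Lipschitz with constant $L_\pi$. Let $\gamma>0$, $\epsilon>0$, and suppose $(V,\pi)$ is $\epsilon$-stable within $\mathcal{R}(\gamma)$, $\|\pi(0)-u_0\|_\infty\le\epsilon$, and $\gamma\ge L_f\max\{1,L_\pi+1\}\epsilon$. Let $B(\gamma)$ be any number with $B(\gamma)\ge\max\big(\sup_{x\in\mathcal{R}(\gamma)}\|f(x,\pi(x))\|_\infty,\ \gamma\big)$, let $V^*=\min\{V(x): x\in\mathcal{X},\ \gamma\le\|x\|_\infty\le B(\gamma)\}$ (assumed to be attained), and let $\rho=V^*-\mu$ for some $\mu>0$. Then $\mathcal{D}(\gamma,\rho)=\{x\in\mathcal{R}(\gamma): V(x)\le\rho\}$ is an $\mathcal{R}(\gamma)$-invariant sublevel set, i.e. $x\in\mathcal{D}(\gamma,\rho)$ implies $f(x,\pi(x))\in\mathcal{R}(\gamma)$.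
   Context: All norms are $\|\cdot\|_\infty$. $\mathcal{R}(\gamma)=\{x\in\mathcal{X}:\|x\|_\infty\le\gamma\}$. $\mathcal{B}(0,\epsilon)=\{x:\|x\|_\infty<\epsilon\}$. The pair $(V,\pi)$ is called $\epsilon$-stable within a region $\mathcal{R}$ if: (a) $V(0)=0$; (b) there exists $\zeta>0$ such that $V(f(x,\pi(x)))-V(x)<-\zeta$ for all $x\in\mathcal{R}\setminus\mathcal{B}(0,\epsilon)$; (c) $V(x)>0$ for all $x\in\mathcal{R}\setminus\mathcal{B}(0,\epsilon)$. *)

(* X = 'rV[R]_n, U = 'rV[R]_m, R : realType.
   The norm `|x| on row vectors is MathComp-Analysis' mx_norm,
   i.e. the sup-norm max_i |x_i|. *)
From HB Require Import structures.
From mathcomp Require Import all_boot all_order all_algebra.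
From mathcomp Require Import all_classical all_reals all_analysis.
Set Implicit Arguments. Unset Strict Implicit. Unset Printing Implicit Defensive.
Import Order.TTheory GRing.Theory Num.Theory.
Import numFieldNormedType.Exports.
Local Open Scope ring_scope.

Definition Rgam {R : realType} {n : nat} (gamma : R) (x : 'rV[R]_n) : Prop :=
  `|x| <= gamma.

Definition Ball0 {R : realType} {n : nat} (eps : R) (x : 'rV[R]_n) : Prop :=
  `|x| < eps.

Definition eps_stable {R : realType} {n m : nat}
  (f : 'rV[R]_n -> 'rV[R]_m -> 'rV[R]_n)
  (V : 'rV[R]_n -> R) (pi : 'rV[R]_n -> 'rV[R]_m)
  (eps : R) (Reg : 'rV[R]_n -> Prop) : Prop :=
  [/\ V 0 = 0,
      exists2 zeta : R, 0 < zeta &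
        forall x, Reg x -> ~ Ball0 eps x -> V (f x (pi x)) - V x < - zeta
    & forall x, Reg x -> ~ Ball0 eps x -> 0 < V x].

Definition Dset {R : realType} {n : nat} (V : 'rV[R]_n -> R) (gamma rho : R)
  (x : 'rV[R]_n) : Prop := Rgam gamma x /\ V x <= rho.

From HB Require Import structures.
From mathcomp Require Import all_boot all_order all_algebra.
From mathcomp Require Import all_classical all_reals all_analysis.
From mathcomp Require Import lra.
Set Implicit Arguments. Unset Strict Implicit. Unset Printing Implicit Defensive.
Import Order.TTheory GRing.Theory Num.Theory.
Import numFieldNormedType.Exports.
Local Open Scope ring_scope.

(* Let y = f x (pi x) for x in D(gamma, rho).
   - Near the origin (||x|| < eps) we argue metrically: y = f x (pi x) - f 0 u0,
     so ||y|| <= Lf * max(||x||, ||pi x - u0||), and the Lipschitz bound on pi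
     together with ||pi 0 - u0|| <= eps gives ||pi x - u0|| <= max(1, Lpi+1) eps;
     the hypothesis Lf * max(1, Lpi+1) * eps <= gamma then yields ||y|| <= gamma.
   - Away from the origin we argue by levels: the Lyapunov decrease gives
     V y < V x - zeta <= V* - mu, so V y < V*.  Since ||y|| <= B, the point y
     cannot lie in the annulus gamma <= ||y|| <= B on which V >= V*, hence
     ||y|| < gamma. *)

Section NearOrigin.
Variables (R : realFieldType) (X U : normedZmodType R).

(* For 0 <= a <= e and any sign of L, the bound L a + e is at most
   max(1, L+1) e; this is where max(1, Lpi+1) in the hypothesis comes from. *)
Lemma affine_le_max_scale (L a e : R) :
  0 <= a <= e -> L * a + e <= Num.max 1 (L + 1) * e.
Proof.
case/andP=> a0 ae; have e0 : 0 <= e by exact: le_trans ae.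
have [L0|L0] := ltP L 0.
  have : L * a <= 0 by rewrite nmulr_rle0.
  have : e <= Num.max 1 (L + 1) * e by rewrite ler_peMl // le_max lexx.
  lra.
have : (L + 1) * e <= Num.max 1 (L + 1) * e.
  by rewrite ler_wpM2r // le_max lexx orbT.
have : L * a <= L * e by rewrite ler_wpM2l.
lra.
Qed.

Lemma lipschitz_offset_bound (pi : X -> U) (Lpi : R) (u0 : U) (x : X) :
  (forall x x', `|pi x - pi x'| <= Lpi * `|x - x'|) ->
  `|pi x - u0| <= Lpi * `|x| + `|pi 0 - u0|.
Proof.
move=> Hpi; have -> : pi x - u0 = (pi x - pi 0) + (pi 0 - u0).
  by rewrite addrA subrK.
apply: (le_trans (ler_normD _ _)); rewrite lerD2r.
by have := Hpi x 0; rewrite subr0.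
Qed.

Lemma control_near_origin (pi : X -> U) (Lpi eps : R) (u0 : U) (x : X) :
  (forall x x', `|pi x - pi x'| <= Lpi * `|x - x'|) ->
  `|pi 0 - u0| <= eps -> `|x| <= eps ->
  `|pi x - u0| <= Num.max 1 (Lpi + 1) * eps.
Proof.
move=> Hpi Hpi0 Hx.
apply: (le_trans (lipschitz_offset_bound u0 x Hpi)).
have Hx' : 0 <= `|x| <= eps by rewrite normr_ge0 Hx.
apply: le_trans (affine_le_max_scale Lpi Hx').
by rewrite lerD2l.
Qed.

Lemma step_near_origin (f : X -> U -> X) (pi : X -> U) (u0 : U)
    (Lf Lpi gamma eps : R) (x : X) :
  (forall x x' u u', `|f x u - f x' u'| <= Lf * Num.max `|x - x'| `|u - u'|) ->
  f 0 u0 = 0 ->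
  (forall x x', `|pi x - pi x'| <= Lpi * `|x - x'|) ->
  0 < gamma -> 0 <= eps -> `|pi 0 - u0| <= eps ->
  Lf * Num.max 1 (Lpi + 1) * eps <= gamma ->
  `|x| <= eps -> `|f x (pi x)| <= gamma.
Proof.
move=> Hf Hf0 Hpi g0 e0 Hpi0 Hg Hx.
have Hy : `|f x (pi x)| <= Lf * Num.max `|x| `|pi x - u0|.
  by have := Hf x 0 (pi x) u0; rewrite Hf0 !subr0.
apply: (le_trans Hy).
have M0 : 0 <= Num.max `|x| `|pi x - u0| by rewrite le_max normr_ge0.
have [Lf0|Lf0] := ltP Lf 0.
  by apply: le_trans (ltW g0); rewrite nmulr_rle0.
apply: le_trans Hg; rewrite -mulrA ler_wpM2l // ge_max.
rewrite control_near_origin // andbT.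
by apply: (le_trans Hx); rewrite ler_peMl // le_max lexx.
Qed.

End NearOrigin.

Lemma below_annulus_min (R : realFieldType) (X : normedZmodType R)
    (V : X -> R) (gamma B Vstar : R) (y : X) :
  (forall x, gamma <= `|x| <= B -> Vstar <= V x) ->
  `|y| <= B -> V y < Vstar -> `|y| <= gamma.
Proof.
move=> Hmin HyB HVy; rewrite leNgt; apply/negP => Hgy.
by have := Hmin y (introT andP (conj (ltW Hgy) HyB)); rewrite leNgt HVy.
Qed.

Theorem theorem2 (R : realType) (n m : nat)
  (f : 'rV[R]_n -> 'rV[R]_m -> 'rV[R]_n) (u0 : 'rV[R]_m)
  (V : 'rV[R]_n -> R) (pi : 'rV[R]_n -> 'rV[R]_m)
  (Lf Lpi gamma eps B Vstar mu rho : R) :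
  (forall x x' u u', `|f x u - f x' u'| <= Lf * Num.max `|x - x'| `|u - u'|) ->
  f 0 u0 = 0 ->
  (forall x x', `|pi x - pi x'| <= Lpi * `|x - x'|) ->
  0 < gamma -> 0 < eps ->
  eps_stable f V pi eps (Rgam gamma) ->
  `|pi 0 - u0| <= eps ->
  Lf * Num.max 1 (Lpi + 1) * eps <= gamma ->
  (forall x, Rgam gamma x -> `|f x (pi x)| <= B) -> gamma <= B ->
  (exists2 xs : 'rV[R]_n, gamma <= `|xs| <= B & V xs = Vstar) ->
  (forall x : 'rV[R]_n, gamma <= `|x| <= B -> Vstar <= V x) ->
  0 < mu -> rho = Vstar - mu ->
  forall x, Dset V gamma rho x -> Rgam gamma (f x (pi x)).
Proof.
move=> Hf Hf0 Hpi g0 e0 [_ [zeta zeta0 Hdec] _] Hpi0 Hg HB _ _ Hmin mu0 -> x.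
case=> Hx HVx; rewrite /Rgam.
have [Hxe|Hxe] := ltP `|x| eps.
  exact: (step_near_origin Hf Hf0 Hpi g0 (ltW e0) Hpi0 Hg (ltW Hxe)).
have Hstep : V (f x (pi x)) - V x < - zeta.
  by apply: Hdec => //; rewrite /Ball0 ltNge Hxe.
apply: (below_annulus_min Hmin (HB x Hx)); lra.
Qed.
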